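(* For all integers $n\ge1$ and $0\le m\le n-1$, $$\sum_{j=0}^{m}\begin{bmatrix} n\\ m-j\end{bmatrix}_q\begin{bmatrix} n-m-1\\ j\end{bmatrix}_q q^{j^2}=\sum_{j=0}^{m}\begin{bmatrix} n-1\\ m-j\end{bmatrix}_q\begin{bmatrix} n-m\\ j\end{bmatrix}_q q^{j^2}.$$
   Context: Here $q$ is an indeterminate and for integers $a\ge0$ and $b$, $\begin{bmatrix} a\\ b\end{bmatrix}_q=\frac{(1-q^a)(1-q^{a-1})\cdots(1-q^{a-b+1})}{(1-q)(1-q^2)\cdots(1-q^b)}$ for $0\le b\le a$ and $0$ otherwise. *)

From HB Require Import structures.
From mathcomp Require Import all_boot all_order all_algebra fraction.
Set Implicit Arguments. Unset Strict Implicit. Unset Printing Implicit Defensive.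
Import Order.TTheory GRing.Theory Num.Theory.
Local Open Scope ring_scope.

(* The field of rational functions Q(q) over the integers: fractions of
   polynomials in the indeterminate q = 'X with integer coefficients. *)
Definition ratfun := {fraction {poly int}}.

Definition qX : ratfun := @FracField.tofrac {poly int} 'X.

(* Arguments are integers (a >= 0 is ensured in use). *)
Definition qbinom (a b : int) : ratfun :=
  if (0 <= b) && (b <= a) then
    (\prod_(i < `|b|%N) (1 - qX ^+ (`|a|%N - i)%N)) /
    (\prod_(i < `|b|%N) (1 - qX ^+ i.+1))
  else 0.

(* Write n = N + m + 1.  Expanding the top index of [n; m - j] on the left,
   and of [N + 1; j] on the right, by the q-Pascal rule turns both sides into
   the same main sum plus a correction sum.  The two correction sums coincide
   after shifting j by one, since (j + 1)^2 + (N - j) = j^2 + (N + j + 1). *)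

From HB Require Import structures.
From mathcomp Require Import all_boot all_order all_algebra.
From mathcomp Require Import fraction ring zify.
Set Implicit Arguments.
Unset Strict Implicit.
Unset Printing Implicit Defensive.

Import Order.TTheory GRing.Theory Num.Theory.
Local Open Scope ring_scope.

Section GaussianBinomial.

Variables (F : fieldType) (x : F).
Hypothesis x_not_root1 : forall k, (0 < k)%N -> x ^+ k != 1.

Definition gbinom (a b : nat) : F :=
  (\prod_(i < b) (1 - x ^+ (a - i))) / \prod_(i < b) (1 - x ^+ i.+1).

Lemma gbinom0 a : gbinom a 0 = 1.
Proof. by rewrite /gbinom !big_ord0 divr1. Qed.

Lemma gbinom_num_small a b :
  (a < b)%N -> \prod_(i < b) (1 - x ^+ (a - i)) = 0.
Proof.
by move=> lt_ab; rewrite (bigD1 (Ordinal lt_ab)) //= subnn expr0 subrr mul0r.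
Qed.

Lemma gbinom_small a b : (a < b)%N -> gbinom a b = 0.
Proof. by move=> lt_ab; rewrite /gbinom gbinom_num_small // mul0r. Qed.

Lemma gbinomS a b :
  gbinom a.+1 b.+1 = gbinom a b.+1 + x ^+ (a - b) * gbinom a b.
Proof.
rewrite /gbinom big_ord_recl [X in _ = X / _ + _]big_ord_recr !big_ord_recr /=.
rewrite subn0 (eq_bigr (fun i : 'I_b => 1 - x ^+ (a - i))) //.
set P := \prod_(i < b) _; set D := \prod_(i < b) _.
have [lt_ab | le_ba] := ltnP a b.
  by rewrite /P gbinom_num_small // !(mulr0, mul0r, addr0).
have D_neq0 : D != 0.
  by apply/prodf_neq0 => i _; rewrite subr_eq0 eq_sym x_not_root1.
have Xb_neq0 : 1 - x ^+ b.+1 != 0 by rewrite subr_eq0 eq_sym x_not_root1.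
have -> : x ^+ a.+1 = x ^+ (a - b) * x ^+ b.+1 by rewrite -exprD; congr (_ ^+ _); lia.
by field; rewrite D_neq0 Xb_neq0.
Qed.

Variables (N m : nat).

Let corr (j : nat) : F :=
  x ^+ (j * j + N + j.+1) * gbinom (N + m) (m - j.+1) * gbinom N j.

Let main_sum : F :=
  \sum_(0 <= j < m.+1) gbinom (N + m) (m - j) * gbinom N j * x ^+ (j * j).

Lemma gbinom_top_expansion :
  \sum_(0 <= j < m.+1) gbinom (N + m).+1 (m - j) * gbinom N j * x ^+ (j * j)
  = main_sum + \sum_(0 <= j < m) corr j.
Proof.
rewrite /main_sum !big_nat_recr //= subnn !gbinom0 addrAC -big_split /=.
congr (_ + _); apply: eq_big_nat => j /andP[_ lt_jm].
have -> : (m - j = (m - j.+1).+1)%N by lia.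
rewrite gbinomS /corr !mulrDl; congr (_ + _).
have -> : (N + m - (m - j.+1) = N + j.+1)%N by lia.
by rewrite !exprD; ring.
Qed.

Lemma gbinom_bottom_expansion :
  \sum_(0 <= j < m.+1) gbinom (N + m) (m - j) * gbinom N.+1 j * x ^+ (j * j)
  = main_sum + \sum_(0 <= j < m) corr j.
Proof.
rewrite /main_sum !big_nat_recl //= !gbinom0 -addrA -big_split /=.
congr (_ + _); apply: eq_big_nat => j _.
rewrite gbinomS /corr mulrDr mulrDl; congr (_ + _).
have [lt_Nj | le_jN] := ltnP N j.
  by rewrite (gbinom_small lt_Nj) !(mulr0, mul0r).
rewrite -[in RHS](_ : (N - j + j.+1 * j.+1 = j * j + N + j.+1)%N); last by nia.
rewrite exprD; move: (x ^+ _) (x ^+ _) => u v; ring.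
Qed.

Lemma gbinom_convolution_shift :
  \sum_(0 <= j < m.+1) gbinom (N + m).+1 (m - j) * gbinom N j * x ^+ (j * j)
  = \sum_(0 <= j < m.+1) gbinom (N + m) (m - j) * gbinom N.+1 j * x ^+ (j * j).
Proof. by rewrite gbinom_top_expansion gbinom_bottom_expansion. Qed.

End GaussianBinomial.

Lemma qX_not_root1 k : (0 < k)%N -> qX ^+ k != 1.
Proof.
move=> k_gt0; rewrite /qX -tofracXn -tofrac1 tofrac_eq.
apply/eqP => /(congr1 (fun p : {poly int} => size p)).
by rewrite size_polyXn size_poly1; case: k k_gt0.
Qed.

Lemma qbinom_gbinom (a b : nat) : qbinom a%:Z b%:Z = gbinom qX a b.
Proof.
rewrite /qbinom /= lez_nat; case: leqP => // lt_ab.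
by rewrite gbinom_small.
Qed.

Theorem mainTheorem18 (n m : nat) (hn : (1 <= n)%N) (hm : (m <= n - 1)%N) :
  \sum_(0 <= j < m.+1)
     qbinom n%:Z (m%:Z - j%:Z) * qbinom (n%:Z - m%:Z - 1) j%:Z * qX ^+ (j * j)%N
  = \sum_(0 <= j < m.+1)
     qbinom (n%:Z - 1) (m%:Z - j%:Z) * qbinom (n%:Z - m%:Z) j%:Z * qX ^+ (j * j)%N.
Proof.
set N := (n - 1 - m)%N.
have -> : n%:Z = (N + m).+1%:Z by rewrite /N; lia.
have -> : (N + m).+1%:Z - m%:Z - 1 = N%:Z by lia.
have -> : (N + m).+1%:Z - 1 = (N + m)%:Z by lia.
have -> : (N + m).+1%:Z - m%:Z = N.+1%:Z by lia.
have sub_nat j : (j < m.+1)%N -> m%:Z - j%:Z = (m - j)%N%:Z by lia.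
under eq_big_nat => j /andP[_ /sub_nat->] do rewrite !qbinom_gbinom.
under [RHS]eq_big_nat => j /andP[_ /sub_nat->] do rewrite !qbinom_gbinom.
exact: gbinom_convolution_shift qX_not_root1 N m.
Qed.
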